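(* Let $m\geq 3$. The matching $\mu$ on the face poset of $\Delta_m^{3,2}$ has at least $(m-2)^3$ critical cells of dimension $3$.
   Context: $\Delta_m^{3,2}=\mathrm{VR}(\{0,\ldots,m\}^3;2)$, where $\{0,\ldots,m\}^3$ carries the Manhattan metric $d(x,y)=\sum_i|x_i-y_i|$ and $\mathrm{VR}(X;r)$ is the complex of finite subsets of diameter $\leq r$. Order the vertices as $v_1\prec\cdots\prec v_N$ ($N=(m+1)^3$) in the anti-lexicographic order ($x\prec y$ iff at the largest index $i$ with $x_i\neq y_i$, $x_i<y_i$). Let $T_0$ be the set of all simplices, including the empty simplex. For $i=1,\ldots,N$ put $S_i=\{\sigma\in T_{i-1}: v_i\notin\sigma,\ \sigma\cup\{v_i\}\in T_{i-1}\}$, $\mu(\sigma)=\sigma\cup\{v_i\}$ for $\sigma\in S_i$, and $T_i=T_{i-1}\setminus(S_i\cup\{\sigma\cup\{v_i\}:\sigma\in S_i\})$. The critical cells of $\mu$ are the simplices in $T_N$; the dimension of a simplex is its cardinality minus one. *)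

From mathcomp Require Import all_boot.
Set Implicit Arguments. Unset Strict Implicit. Unset Printing Implicit Defensive.

Definition gridV (m : nat) : finType := ('I_m.+1 * 'I_m.+1 * 'I_m.+1)%type.

Definition c1 m (x : gridV m) : nat := x.1.1.
Definition c2 m (x : gridV m) : nat := x.1.2.
Definition c3 m (x : gridV m) : nat := x.2.

Definition absdiff (a b : nat) : nat := (a - b) + (b - a).

Definition manh m (x y : gridV m) : nat :=
  absdiff (c1 x) (c1 y) + absdiff (c2 x) (c2 y) + absdiff (c3 x) (c3 y).

(* Simplices of VR({0..m}^3; 2): finite subsets of diameter <= 2
   (the empty simplex included). *)
Definition is_simplex m (s : {set gridV m}) : bool :=
  [forall x in s, forall y in s, manh x y <= 2].

Definition T0 m : {set {set gridV m}} := [set s | is_simplex s].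

Definition antilex_lt m (x y : gridV m) : bool :=
  (c3 x < c3 y) || ((c3 x == c3 y) &&
  ((c2 x < c2 y) || ((c2 x == c2 y) && (c1 x < c1 y)))).

Definition vertex_order m : seq (gridV m) :=
  flatten [seq flatten [seq [seq ((i1, i2), i3) : gridV m | i1 <- enum 'I_m.+1]
                          | i2 <- enum 'I_m.+1]
          | i3 <- enum 'I_m.+1].

(* One step of the matching: given T_{i-1} and v = v_i, produce T_i. *)
Definition match_set m (v : gridV m) (T : {set {set gridV m}}) : {set {set gridV m}} :=
  [set s in T | (v \notin s) && (s :|: [set v] \in T)].

Definition step m (T : {set {set gridV m}}) (v : gridV m) : {set {set gridV m}} :=
  let S := match_set v T in
  T :\: (S :|: [set s :|: [set v] | s in S]).

Definition critical_cells m : {set {set gridV m}} :=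
  foldl (@step m) (T0 m) (vertex_order m).

(* Dimension of a simplex = cardinality - 1, so dimension 3 <-> 4 vertices. *)
Definition critical_cells_dim m (d : nat) : {set {set gridV m}} :=
  [set s in critical_cells m | #|s| == d.+1].

(* A unit square [{a, a+1} x {b, b+1} x {c}] with [c >= 1] is a maximal simplex, so the
   matching can only pair it with one of its facets [square \ v].  But that facet is matched
   earlier, with the simplex obtained by adding the point below the corner opposite to [v]:
   this point precedes [v] anti-lexicographically, and no earlier vertex can be added to the
   resulting 3-simplex, so it is still available when its minimum vertex is processed.  Hence
   every such square is critical, which already gives [m^3] critical 3-cells. *)
From mathcomp Require Import all_boot zify.

Set Implicit Arguments.
Unset Strict Implicit.
Unset Printing Implicit Defensive.

Section Matching.
Variables (m : nat) (T : {set {set gridV m}}) (vs : seq (gridV m)).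
Hypothesis vs_uniq : uniq vs.

Lemma mem_step (S : {set {set gridV m}}) v r :
  (r \in step S v) =
  [&& r \in S, (v \notin r) ==> (v |: r \notin S) & (v \in r) ==> (r :\ v \notin S)].
Proof.
rewrite /step in_setD in_setU; have [r_S | ] := boolP (r \in S); last by rewrite andbF.
have -> : (r \in [set s :|: [set v] | s in match_set v S]) = (v \in r) && (r :\ v \in S).
  apply/imsetP/andP => [[s] | [v_r rv_S]].
    by rewrite inE => /and3P [s_S v_s _] ->; rewrite setUC setU11 setU1K.
  exists (r :\ v); last by rewrite setUC setD1K.
  by rewrite /match_set inE rv_S setD11 setUC setD1K.
rewrite /match_set inE r_S setUC.
by case: (v \in r); case: (v |: r \in S); case: (r :\ v \in S).
Qed.

Lemma foldl_step_subset S s : foldl (@step m) S s \subset S.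
Proof.
elim: s S => [|v s IH] S /=; first exact: subxx.
by apply: subset_trans (IH _) _; apply: subsetDl.
Qed.

Definition stage k := foldl (@step m) T (take k vs).

Lemma stage0 : stage 0 = T.
Proof. by rewrite /stage take0. Qed.

Lemma stage_subset_init k : stage k \subset T.
Proof. exact: foldl_step_subset. Qed.

Lemma stage_subset i j : i <= j -> stage j \subset stage i.
Proof.
move=> le_ij; rewrite /stage -(cat_take_drop i (take j vs)) take_takel //.
by rewrite foldl_cat foldl_step_subset.
Qed.

Lemma stage_succ x0 k : k < size vs -> stage k.+1 = step (stage k) (nth x0 vs k).
Proof. by move=> lt_k; rewrite /stage (take_nth x0 lt_k) foldl_rcons. Qed.

Lemma mem_stage (r : {set gridV m}) n : r \in T ->
  (forall v, index v vs < n -> v \notin r -> v |: r \notin T) ->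
  (forall v, index v vs < n -> v \in r -> r :\ v \notin stage (index v vs)) ->
  r \in stage n.
Proof.
move=> r_T grow shrink; elim: n grow shrink => [|n IH] grow shrink; first by rewrite stage0.
have r_n : r \in stage n.
  by apply: IH => v lt_v; [apply: grow | apply: shrink]; apply: ltnW.
have [lt_n | le_n] := ltnP n (size vs); last first.
  by rewrite /stage take_oversize ?(leqW le_n) // -(take_oversize le_n).
pose x0 : gridV m := ((ord0, ord0), ord0).
have idx_v : index (nth x0 vs n) vs = n by rewrite index_uniq.
rewrite (stage_succ x0 lt_n) mem_step r_n /=; apply/andP; split; apply/implyP => v_r.
  apply: contra (grow _ _ v_r); last by rewrite idx_v.
  exact: (subsetP (stage_subset_init n)).
by have := shrink _ _ v_r; rewrite idx_v; apply.
Qed.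

Lemma notin_stage (t : {set gridV m}) w n : w \in vs -> w \notin t ->
  w |: t \in stage (index w vs) -> index w vs < n -> t \notin stage n.
Proof.
move=> w_vs w_t wt_stage lt_wn; apply/negP => /(subsetP (stage_subset lt_wn)).
by rewrite (stage_succ w) ?index_mem // nth_index // mem_step w_t wt_stage andbF.
Qed.

End Matching.

Lemma pairwise_flatten_map (A B : eqType) (R : rel A) (r : rel B) (F : A -> seq B) s :
  pairwise R s -> (forall i, pairwise r (F i)) ->
  (forall i j, R i j -> forall x y, x \in F i -> y \in F j -> r x y) ->
  pairwise r (flatten (map F s)).
Proof.
move=> + F_r R_r; elim: s => [|i s IH] //= /andP [R_i R_s].
rewrite pairwise_cat F_r IH // !andbT; apply/allrelP => x y x_i /flattenP [_ /mapP [j j_s ->]].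
exact: R_r (allP R_i j j_s) x y x_i.
Qed.

Lemma pairwise_ltn_enum n : pairwise (fun i j : 'I_n => i < j) (enum 'I_n).
Proof.
rewrite -(pairwise_map val (fun i j => i < j)) val_enum_ord -sorted_pairwise.
  exact: iota_ltn_sorted.
exact: ltn_trans.
Qed.

Section VertexOrder.
Variable m : nat.
Local Notation vo := (vertex_order m).

Lemma antilex_ltxx : irreflexive (@antilex_lt m).
Proof. by move=> x; rewrite /antilex_lt !ltnn !eqxx. Qed.

Lemma antilex_lt_trans : transitive (@antilex_lt m).
Proof. rewrite /antilex_lt => y x z; lia. Qed.

Lemma antilex_lt_asym (x y : gridV m) : antilex_lt x y -> antilex_lt y x = false.
Proof. rewrite /antilex_lt; lia. Qed.

Lemma mem_vertex_order x : x \in vo.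
Proof.
case: x => [[x1 x2] x3]; apply/flattenP; eexists; first exact/map_f/mem_enum.
by apply/flattenP; eexists; apply/map_f/mem_enum.
Qed.

Lemma sorted_vertex_order : sorted (@antilex_lt m) vo.
Proof.
rewrite sorted_pairwise; last exact: antilex_lt_trans.
apply: (pairwise_flatten_map (pairwise_ltn_enum _)) => [i3 | i3 j3 lt3 x y].
  apply: (pairwise_flatten_map (pairwise_ltn_enum _)) => [i2 | i2 j2 lt2 x y].
    rewrite pairwise_map; apply: sub_pairwise (pairwise_ltn_enum _) => i1 j1 lt1.
    by rewrite /antilex_lt /c1 /c2 /c3 /= lt1 !eqxx ltnn orbT.
  by move=> /mapP [i1 _ ->] /mapP [j1 _ ->]; rewrite /antilex_lt /c1 /c2 /c3 /= lt2 eqxx ltnn.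
move=> /flattenP [_ /mapP [i2 _ ->] /mapP [i1 _ ->]].
by move=> /flattenP [_ /mapP [j2 _ ->] /mapP [j1 _ ->]]; rewrite /antilex_lt /c3 /= lt3.
Qed.

Lemma uniq_vertex_order : uniq vo.
Proof.
by move: sorted_vertex_order; apply: sorted_uniq; [apply: antilex_lt_trans | apply: antilex_ltxx].
Qed.

Lemma index_vertex_order x y : (index x vo < index y vo) = antilex_lt x y.
Proof.
have lex_index u v : index u vo < index v vo -> antilex_lt u v.
  by apply: (sorted_ltn_index antilex_lt_trans sorted_vertex_order); apply: mem_vertex_order.
apply/idP/idP => [|lt_xy]; first exact: lex_index.
rewrite ltnNge leq_eqVlt; apply/negP => /orP [/eqP | /lex_index].
  move/(index_inj y (mem_vertex_order y) (mem_vertex_order x)) => eq_yx.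
  by rewrite eq_yx antilex_ltxx in lt_xy.
by rewrite (antilex_lt_asym lt_xy).
Qed.

End VertexOrder.

Lemma gridV_eqE m (x y : gridV m) :
  (x == y) = [&& c1 x == c1 y, c2 x == c2 y & c3 x == c3 y].
Proof.
case: x y => [[x1 x2] x3] [[y1 y2] y3]; rewrite /c1 /c2 /c3 /=.
by rewrite -!pair_eqE /= andbA.
Qed.

Section Simplices.
Variable m : nat.
Implicit Types (x y : gridV m) (s t : {set gridV m}).

Lemma manhC x y : manh x y = manh y x.
Proof. rewrite /manh /absdiff; lia. Qed.

Lemma manhxx x : manh x x = 0.
Proof. rewrite /manh /absdiff; lia. Qed.

Lemma simplex_dist s x y : s \in T0 m -> x \in s -> y \in s -> manh x y <= 2.
Proof. by rewrite inE => /forallP /(_ x) /implyP s_x /s_x /forallP /(_ y) /implyP. Qed.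

Lemma simplexS s t : s \subset t -> t \in T0 m -> s \in T0 m.
Proof.
move=> /subsetP s_t t_T0; rewrite inE; apply/forallP => x; apply/implyP => x_s.
by apply/forallP => y; apply/implyP => y_s; apply: simplex_dist t_T0 _ _; apply: s_t.
Qed.

Lemma simplexU1 x s : s \in T0 m -> {in s, forall y, manh x y <= 2} -> x |: s \in T0 m.
Proof.
move=> s_T0 near_x; rewrite inE; apply/forallP => y; apply/implyP => /setU1P y_xs.
apply/forallP => z; apply/implyP => /setU1P z_xs.
case: y_xs z_xs => [-> | y_s] [-> | z_s]; rewrite ?manhxx ?near_x //.
  by rewrite manhC near_x.
exact: simplex_dist s_T0 y_s z_s.
Qed.

End Simplices.

Lemma absdiffC x y : absdiff x y = absdiff y x.
Proof. by rewrite /absdiff addnC. Qed.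

Lemma leq_absdiff_trans x y z : absdiff x z <= absdiff x y + absdiff y z.
Proof. rewrite /absdiff; lia. Qed.

Lemma below_three_corners o1 o2 v1 v2 u1 u2 u3 c :
  absdiff o1 v1 = 1 -> absdiff o2 v2 = 1 -> u3 < c ->
  absdiff u1 o1 + absdiff u2 o2 + absdiff u3 c <= 2 ->
  absdiff u1 o1 + absdiff u2 v2 + absdiff u3 c <= 2 ->
  absdiff u1 v1 + absdiff u2 o2 + absdiff u3 c <= 2 ->
  [/\ u1 = o1, u2 = o2 & u3.+1 = c].
Proof.
move=> o1v1 o2v2 lt_u3 d_oo d_ov d_vo.
(* [d_ov + d_vo] and the triangle inequalities through [u1] and [u2] leave no slack. *)
have := leq_absdiff_trans o1 u1 v1; have := leq_absdiff_trans o2 u2 v2.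
have : 0 < absdiff u3 c by rewrite /absdiff; lia.
rewrite o1v1 o2v2 (absdiffC o1) (absdiffC o2) => far_c tri2 tri1.
have : [/\ absdiff u1 o1 = 0, absdiff u2 o2 = 0 & absdiff u3 c = 1] by split; lia.
by case; rewrite /absdiff => *; split; lia.
Qed.

Definition grid_pt m p q r : gridV m := ((inord p, inord q), inord r).

Section GridPoints.
Variables m p q r : nat.

Lemma c1_pt : p <= m -> c1 (grid_pt m p q r) = p.
Proof. by move=> le_pm; rewrite /c1 /= inordK. Qed.

Lemma c2_pt : q <= m -> c2 (grid_pt m p q r) = q.
Proof. by move=> le_qm; rewrite /c2 /= inordK. Qed.

Lemma c3_pt : r <= m -> c3 (grid_pt m p q r) = r.
Proof. by move=> le_rm; rewrite /c3 /= inordK. Qed.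

Lemma manh_pt (u : gridV m) : p <= m -> q <= m -> r <= m ->
  manh u (grid_pt m p q r) = absdiff (c1 u) p + absdiff (c2 u) q + absdiff (c3 u) r.
Proof. by move=> le_pm le_qm le_rm; rewrite /manh c1_pt ?c2_pt ?c3_pt. Qed.

End GridPoints.

Section UnitSquare.
Variables m a b c : nat.
Hypotheses (lt_am : a < m) (lt_bm : b < m) (le_cm : c <= m).
Local Notation pt := (grid_pt m).

Definition square : {set gridV m} := [set pt a b c; pt a.+1 b c; pt a b.+1 c; pt a.+1 b.+1 c].

Lemma corner_in_square : pt a b c \in square.
Proof. by rewrite !inE eqxx. Qed.

Lemma in_square x : (x \in square) = [&& a <= c1 x <= a.+1, b <= c2 x <= b.+1 & c3 x == c].
Proof.
have unit_interval n k : (k <= n <= k.+1) = (n == k) || (n == k.+1) by lia.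
rewrite !inE !gridV_eqE !c1_pt ?c2_pt ?c3_pt // ?(ltnW lt_am) ?(ltnW lt_bm) // !unit_interval.
by case: (c1 x == a) (c1 x == a.+1) (c2 x == b) (c2 x == b.+1) (c3 x == c) => [] [] [] [] [].
Qed.

Lemma card_square : #|square| = 4.
Proof.
rewrite /square -!setUA !cardsU1 cards1 !inE !gridV_eqE.
rewrite !c1_pt ?c2_pt ?c3_pt // ?(ltnW lt_am) ?(ltnW lt_bm) //.
by rewrite !eqxx !(ltn_eqF (ltnSn _)) ?(gtn_eqF (ltnSn _)).
Qed.

Lemma square_simplex : square \in T0 m.
Proof.
rewrite inE; apply/forallP => x; apply/implyP; rewrite in_square => x_sq.
by apply/forallP => y; apply/implyP; rewrite in_square /manh /absdiff => y_sq; lia.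
Qed.

Lemma square_maximal u : u \notin square -> u |: square \notin T0 m.
Proof.
move=> u_sq; apply/negP => usq_T0.
have near_u p : p \in square -> manh u p <= 2.
  by move=> p_sq; apply: simplex_dist usq_T0 (setU11 _ _) (setU1r _ p_sq).
have := near_u (pt a b c); have := near_u (pt a.+1 b c).
have := near_u (pt a b.+1 c); have := near_u (pt a.+1 b.+1 c).
rewrite !in_square !c1_pt ?c2_pt ?c3_pt ?manh_pt // ?(ltnW lt_am) ?(ltnW lt_bm) //.
rewrite !leqnn !leqnSn !eqxx /= => /(_ isT) d11 /(_ isT) d01 /(_ isT) d10 /(_ isT) d00.
by move: u_sq; rewrite in_square; move: d11 d01 d10 d00; rewrite /absdiff; lia.
Qed.

Hypothesis c_gt0 : 0 < c.

Definition opp_below (v : gridV m) : gridV m := pt (a + a.+1 - c1 v) (b + b.+1 - c2 v) c.-1.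

Definition square_flip v : {set gridV m} := opp_below v |: (square :\ v).

Lemma opp_below_coord v : v \in square ->
  [/\ c1 (opp_below v) = a + a.+1 - c1 v, c2 (opp_below v) = b + b.+1 - c2 v
    & c3 (opp_below v) = c.-1].
Proof. by rewrite in_square => v_sq; rewrite c1_pt ?c2_pt ?c3_pt //; lia. Qed.

Lemma opp_below_lt v : v \in square -> antilex_lt (opp_below v) v.
Proof.
move=> v_sq; rewrite /antilex_lt; have [-> -> ->] := opp_below_coord v_sq.
by move: v_sq; rewrite in_square; lia.
Qed.

Lemma opp_below_notin v : v \in square -> opp_below v \notin square :\ v.
Proof.
move=> v_sq; rewrite in_setD1 in_square; have [_ _ ->] := opp_below_coord v_sq; lia.
Qed.

Lemma square_flip_simplex v : v \in square -> square_flip v \in T0 m.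
Proof.
move=> v_sq; apply: simplexU1; first exact: simplexS (subD1set _ _) square_simplex.
move=> y; rewrite in_setD1 gridV_eqE in_square => /andP [y_v y_sq].
have [e1 e2 e3] := opp_below_coord v_sq; rewrite /manh e1 e2 e3.
by move: v_sq; rewrite in_square; move: y_v y_sq; rewrite /absdiff; lia.
Qed.

Lemma square_flip_maximal_below u v : v \in square -> antilex_lt u (opp_below v) ->
  u |: square_flip v \notin T0 m.
Proof.
move=> v_sq lt_u; apply/negP => uf_T0.
have [e1 e2 e3] := opp_below_coord v_sq.
have corner p q : a <= p <= a.+1 -> b <= q <= b.+1 -> (p != c1 v) || (q != c2 v) ->
    absdiff (c1 u) p + absdiff (c2 u) q + absdiff (c3 u) c <= 2.
  move=> p_a q_b pq_v; have [le_pm le_qm] : p <= m /\ q <= m by lia.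
  rewrite -manh_pt //; apply: simplex_dist uf_T0 (setU11 _ _) _; apply/setU1r/setU1r.
  rewrite in_setD1 gridV_eqE in_square c1_pt ?c2_pt ?c3_pt // p_a q_b eqxx !andbT.
  by move: pq_v; apply: contraTN => /and3P [-> ->].
move: lt_u v_sq; rewrite /antilex_lt e1 e2 e3 in_square.
set o1 := a + a.+1 - c1 v; set o2 := b + b.+1 - c2 v => lt_u v_sq.
have [o1_a o2_b v1_a v2_b] :
    [/\ a <= o1 <= a.+1, b <= o2 <= b.+1, a <= c1 v <= a.+1 & b <= c2 v <= b.+1].
  by rewrite /o1 /o2; split; lia.
have [o1_v o2_v] : absdiff o1 (c1 v) = 1 /\ absdiff o2 (c2 v) = 1.
  by rewrite /o1 /o2 /absdiff; lia.
have [o1_ne o2_ne] : o1 != c1 v /\ o2 != c2 v by rewrite /o1 /o2; lia.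
have below : c3 u < c by move: lt_u; lia.
have [u1E u2E u3E] : [/\ c1 u = o1, c2 u = o2 & (c3 u).+1 = c].
  by apply: (below_three_corners o1_v o2_v below); apply: corner; rewrite ?o1_ne ?o2_ne ?orbT.
by move: lt_u; rewrite u1E u2E -u3E; lia.
Qed.

Lemma square_critical : square \in critical_cells m.
Proof.
have vo_uniq := uniq_vertex_order m.
have -> : critical_cells m = stage (T0 m) (vertex_order m) (size (vertex_order m)).
  by rewrite /stage take_size.
apply: mem_stage => // [|v _| v _ v_sq]; [exact: square_simplex | exact: square_maximal |].
have lt_v : index (opp_below v) (vertex_order m) < index v (vertex_order m).
  by rewrite index_vertex_order opp_below_lt.
apply: notin_stage (mem_vertex_order _) (opp_below_notin v_sq) _ lt_v => //.
rewrite -/(square_flip v); apply: mem_stage => // [|u lt_u _| u lt_u u_f].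
- exact: square_flip_simplex.
- by apply: square_flip_maximal_below => //; rewrite -index_vertex_order.
- have /setUidPr uf_f : [set u] \subset square_flip v by rewrite sub1set.
  rewrite index_vertex_order in lt_u.
  by have := square_flip_maximal_below v_sq lt_u; rewrite uf_f square_flip_simplex.
Qed.

End UnitSquare.

Lemma square_inj m a b c a' b' c' :
  a < m -> b < m -> c <= m -> a' < m -> b' < m -> c' <= m ->
  square m a b c = square m a' b' c' -> [/\ a = a', b = b' & c = c'].
Proof.
move=> lt_am lt_bm le_cm lt_a'm lt_b'm le_c'm eq_sq.
have := corner_in_square m a b c.
rewrite eq_sq in_square // c1_pt ?c2_pt ?c3_pt ?(ltnW lt_am) ?(ltnW lt_bm) //.
have := corner_in_square m a' b' c'.
rewrite -eq_sq in_square // c1_pt ?c2_pt ?c3_pt ?(ltnW lt_a'm) ?(ltnW lt_b'm) //.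
by move=> in1 in2; split; lia.
Qed.

Lemma card_critical_cells_dim3 m : m ^ 3 <= #|critical_cells_dim m 3|.
Proof.
pose sq (t : 'I_m * 'I_m * 'I_m) := square m t.1.1 t.1.2 t.2.+1.
have sq_inj : injective sq.
  by move=> [[a b] c] [[a' b'] c'] /square_inj [] //= /val_inj -> /val_inj -> [/val_inj ->].
have : sq @: setT \subset critical_cells_dim m 3.
  apply/subsetP => _ /imsetP [[[a b] c] _ ->].
  by rewrite inE square_critical ?card_square.
move/subset_leq_card; rewrite card_imset // cardsT !card_prod !card_ord.
by rewrite !expnS expn0 muln1 mulnA.
Qed.

Theorem lemma4p11 (m : nat) : 3 <= m ->
  (m - 2) ^ 3 <= #|critical_cells_dim m 3|.
Proof.
move=> _; apply: leq_trans (card_critical_cells_dim3 m).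
by rewrite leq_exp2r // leq_subr.
Qed.
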